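(* Let $D\subset\mathbb N^n$ be finite, not contained in any coordinate hyperplane, $p$ a prime, $m\ge1$ an integer and $\varphi:\mathbb Z/m\mathbb Z\to\Sigma_p(D)$ a map. Let $M_{D,p}(\varphi)$ be the set of minimal elements $U\in E_{D,p}(m)$ with $\varphi_U=\varphi$. Then (i) $M_{D,p}(\varphi)$ is empty if and only if at least one of the sets $V(\varphi(-i-1),\varphi(-i))$, $0\le i\le m-1$, is empty; (ii) otherwise the map $$B_\varphi:M_{D,p}(\varphi)\to\prod_{i=0}^{m-1}V(\varphi(-i-1),\varphi(-i))$$ sending $(u_{\mathbf d})_{\mathbf d\in D}$ to its base-$p$ digits $((u_{\mathbf d,i})_{\mathbf d\in D})_{0\le i\le m-1}$ (where $u_{\mathbf d}=\sum_{i=0}^{m-1}u_{\mathbf d,i}p^i$, $0\le u_{\mathbf d,i}\le p-1$) is a well-defined one-to-one correspondence.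
   Context: $s_p$ = base-$p$ digit sum. $E_{D,p}(r)$ = set of $U=(u_{\mathbf d})_{\mathbf d\in D}\in\{0,\dots,p^r-1\}^D$ with $\sum u_{\mathbf d}\mathbf d\equiv0\pmod{p^r-1}$ coordinatewise and all coordinates of $\sum u_{\mathbf d}\mathbf d$ positive ($U$ has length $r$); $s_p(U)=\sum s_p(u_{\mathbf d})$; $\delta_p(D)=\frac1{p-1}\min_{r\ge1}\min_{U\in E_{D,p}(r)}s_p(U)/r$ (the minimum exists); $U\in E_{D,p}(r)$ is minimal if $s_p(U)=(p-1)r\delta_p(D)$. Shift $\delta_r$ on $\{0,\dots,p^r-1\}$: $k\mapsto pk\bmod(p^r-1)$ for $k\le p^r-2$, $p^r-1\mapsto p^r-1$, applied coordinatewise. Support of $U\in E_{D,p}(r)$: $\varphi_U:\mathbb Z/r\mathbb Z\to\mathbb N_{>0}^n$, $\varphi_U(k)=\frac1{p^r-1}\sum_{\mathbf d}\mathbf d(\delta_r^kU)_{\mathbf d}$. $U$ is irreducible if $\varphi_U$ is injective; $MI_{D,p}$ = set of minimal irreducible elements of all lengths; $\Sigma_p(D)=\bigcup_{U\in MI_{D,p}}\mathrm{Im}\varphi_U$. $\psi(U)=(u_{\mathbf d}\bmod p)_{\mathbf d}\in\{0,\dots,p-1\}^D$; for $\mathbf e,\mathbf e'\in\Sigma_p(D)$, $V(\mathbf e,\mathbf e')=\{\psi(U):U\in MI_{D,p},\varphi_U(-1)=\mathbf e,\varphi_U(0)=\mathbf e'\}$. *)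

From mathcomp Require Import all_boot.
Set Implicit Arguments. Unset Strict Implicit. Unset Printing Implicit Defensive.

(* Points of N^n are finite functions 'I_n -> nat.  A finite set D of such
   points is given as a sequence; the index type of families (u_d)_{d in D}
   is the finite type [seq_sub D] of elements of D. *)
Notation vecN n := {ffun 'I_n -> nat}.

Section Defs.
Variables (n : nat) (D : seq (vecN n)) (p : nat).

Notation idx := (seq_sub D).
Notation fam := {ffun idx -> nat}.

(* base-p digit sum s_p(u) = sum_i ((u / p^i) mod p); digits of index > u vanish *)
Definition sp (u : nat) : nat := \sum_(i < u.+1) ((u %/ p ^ i) %% p).

Definition spU (U : fam) : nat := \sum_(d : idx) sp (U d).

Definition wsum (U : fam) : vecN n := [ffun j => \sum_(d : idx) U d * (ssval d) j].

Definition inE (r : nat) (U : fam) : Prop :=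
  0 < r /\ (forall d, U d < p ^ r) /\
  (forall j, (p ^ r - 1) %| wsum U j) /\ (forall j, 0 < wsum U j).

(* U in E_{D,p}(r) is minimal: s_p(U)/r attains min_{r',U'} s_p(U')/r',
   i.e. s_p(U) = (p-1) r delta_p(D). *)
Definition minimalE (r : nat) (U : fam) : Prop :=
  inE r U /\ forall r' (U' : fam), inE r' U' -> spU U * r' <= spU U' * r.

Definition shift (r k : nat) : nat :=
  if k == p ^ r - 1 then k else (p * k) %% (p ^ r - 1).
Definition shiftU (r : nat) (U : fam) : fam := [ffun d => shift r (U d)].

(* support phi_U(k) = (1/(p^r-1)) sum_d d (delta_r^k U)_d, for k in Z/rZ
   (represented by nat k, taken modulo r; delta_r^r = id on E) *)
Definition phiU (r : nat) (U : fam) (k : nat) : vecN n :=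
  [ffun j => wsum (iter k (shiftU r) U) j %/ (p ^ r - 1)].

Definition irreducible (r : nat) (U : fam) : Prop :=
  forall k1 k2, k1 < r -> k2 < r -> phiU r U k1 = phiU r U k2 -> k1 = k2.

Definition inMI (r : nat) (U : fam) : Prop := minimalE r U /\ irreducible r U.

Definition inSigma (e : vecN n) : Prop :=
  exists r (U : fam), inMI r U /\ exists2 k, k < r & phiU r U k = e.

Definition psi (U : fam) : fam := [ffun d => U d %% p].

(* V(e,e') ; phi_U(-1) = phiU r U (r-1) *)
Definition inV (e e' : vecN n) (v : fam) : Prop :=
  exists r (U : fam), [/\ inMI r U, phiU r U r.-1 = e, phiU r U 0 = e' & psi U = v].

Definition inM (m : nat) (phi : 'I_m -> vecN n) (U : fam) : Prop :=
  minimalE m U /\ forall k : 'I_m, phiU m U k = phi k.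

Definition Bdig (m : nat) (U : fam) (i : 'I_m) : fam :=
  [ffun d => (U d %/ p ^ i) %% p].

End Defs.

Arguments sp p u.
Arguments spU {n} D p U.
Arguments wsum {n} D U.
Arguments inE {n} D p r U.
Arguments minimalE {n} D p r U.
Arguments shift p r k.
Arguments shiftU {n} D p r U.
Arguments phiU {n} D p r U k.
Arguments irreducible {n} D p r U.
Arguments inMI {n} D p r U.
Arguments inSigma {n} D p e.
Arguments psi {n} D p U.
Arguments inV {n} D p e e' v.
Arguments inM {n} D p {m} phi U.
Arguments Bdig {n} D p {m} U i.

(* An element U of E_{D,p}(r) amounts to a closed walk g_0, ..., g_r = g_0 in
   N^n, with g_i = phi_U(-i), whose i-th edge is labelled by the i-th base-p
   digits v = (u_{d,i})_d and satisfies sum_d v_d d + g_i = p g_{i+1}; then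
   s_p(U) is the total weight of the labels, and U is minimal iff the walk has
   minimal average weight.  An edge lies in V(e, e') iff it is the first edge
   of a minimal walk without repeated vertices.
   A minimal closed walk without repeated vertices gives, after rotation, such
   a walk for each of its edges; if it repeats a vertex, it splits there into
   two shorter closed walks, both again minimal, so by induction every edge of
   a minimal closed walk lies in the corresponding V.  Conversely, if each edge of a
   closed walk lies in V, it closes up through the rest of a minimal loop; these
   rests glue into one closed walk, whose average weight is at least the
   minimum, which forces the average weight of the given edges to be at most
   the minimum. *)

From mathcomp Require Import all_boot zify.
From Stdlib Require Import Classical_Prop.
Set Implicit Arguments. Unset Strict Implicit. Unset Printing Implicit Defensive.

Lemma sum_ord_trunc (F : nat -> nat) L N : L <= N -> (forall i, L <= i -> F i = 0) ->
  \sum_(i < N) F i = \sum_(i < L) F i.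
Proof.
move=> LN F0; rewrite (big_ord_widen N F LN) [RHS]big_mkcond /=.
by apply: eq_bigr => i _; case: ltnP => // /F0.
Qed.

Definition cyc {T} L s (f : nat -> T) i := f ((s + i) %% L).

Lemma sum_ord_rot (F : nat -> nat) L s : 0 < L ->
  \sum_(i < L) cyc L s F i = \sum_(i < L) F i.
Proof.
move=> L_gt0; pose h (i : 'I_L) := Ordinal (ltn_pmod (s + i) L_gt0).
have h_inj : injective h.
  move=> i j /(congr1 val) /= /eqP; rewrite eqn_modDl !modn_small // => /eqP.
  exact: val_inj.
by rewrite [RHS](reindex_inj h_inj).
Qed.

(* [a / b <= c / d <= e / f] *)
Lemma leq_ratio_trans a b c d e f : 0 < d -> a * d <= c * b -> c * f <= e * d ->
  a * f <= e * b.
Proof.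
move=> d_gt0 le_ac le_ce; rewrite -(leq_pmul2l d_gt0).
have := leq_mul le_ac (leqnn f); have := leq_mul le_ce (leqnn b); nia.
Qed.

Definition splice {T} a (f1 f2 : nat -> T) i := if i < a then f1 i else f2 (i - a).

Lemma splice0 T a (f1 f2 : nat -> T) : f1 a = f2 0 -> splice a f1 f2 0 = f1 0.
Proof. by rewrite /splice; case: a => [|a] //= ->. Qed.

Lemma splice_end T a b (f1 f2 : nat -> T) : splice a f1 f2 (a + b) = f2 b.
Proof. by rewrite /splice ltnNge leq_addr addKn. Qed.

Lemma bounded_all_exists T (x0 : T) (P : nat -> T -> Prop) L :
  (forall i, i < L -> exists x, P i x) -> exists f : nat -> T, forall i, i < L -> P i (f i).
Proof.
case: L => [|L] ex_P; first by exists (fun=> x0).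
have [f Pf] := fin_all_exists (fun i : 'I_L.+1 => ex_P i (ltn_ord i)).
by exists (fun i => f (inord i)) => i lt_i; have := Pf (inord i); rewrite inordK.
Qed.

Section Digits.
Variable p : nat.
Hypothesis p_gt1 : 1 < p.
Let p_gt0 : 0 < p := ltnW p_gt1.

Definition digit j u := u %/ p ^ j %% p.
Definition undigits L (c : nat -> nat) := \sum_(i < L) c i * p ^ i.

Lemma digit0 u : digit 0 u = u %% p.
Proof. by rewrite /digit expn0 divn1. Qed.

Lemma digitS j u : digit j.+1 u = digit j (u %/ p).
Proof. by rewrite /digit expnS divnMA. Qed.

Lemma digit_small j u : u < p ^ j -> digit j u = 0.
Proof. by move=> lt_u; rewrite /digit divn_small ?mod0n. Qed.

Lemma undigitsS L c : undigits L.+1 c = c 0 + p * undigits L (fun i => c i.+1).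
Proof.
rewrite /undigits big_ord_recl /= expn0 muln1 big_distrr; congr (_ + _).
by apply: eq_bigr => i _; rewrite expnS mulnCA.
Qed.

Lemma eq_undigits L c c' : (forall i, i < L -> c i = c' i) ->
  undigits L c = undigits L c'.
Proof. by move=> eq_c; apply: eq_bigr => i _; rewrite eq_c. Qed.

Lemma undigits_lt L c : (forall i, i < L -> c i < p) -> undigits L c < p ^ L.
Proof.
elim: L c => [|L IH] c c_lt; first by rewrite /undigits big_ord0.
have c0_lt : c 0 < p by apply: c_lt.
have : undigits L (fun i => c i.+1) < p ^ L by apply: IH => i lt_i; apply: c_lt.
rewrite -(leq_pmul2l p_gt0) undigitsS expnS; nia.
Qed.

Lemma digit_undigits L c : (forall i, i < L -> c i < p) ->
  forall j, j < L -> digit j (undigits L c) = c j.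
Proof.
elim: L c => [|L IH] c c_lt [|j] // lt_j; rewrite undigitsS.
  by rewrite digit0 addnC mulnC modnMDl modn_small // c_lt.
rewrite digitS addnC mulnC divnMDl // divn_small ?addn0 ?c_lt //.
by apply: (IH (fun i => c i.+1)) => // i lt_i; apply: c_lt.
Qed.

Lemma undigits_digit L u : u < p ^ L -> undigits L (digit^~ u) = u.
Proof.
elim: L u => [|L IH] u lt_u.
  by rewrite /undigits big_ord0; move: lt_u; rewrite expn0; case: u.
rewrite undigitsS (eq_undigits (c' := digit^~ (u %/ p))); last by move=> i _; rewrite digitS.
rewrite IH; last by rewrite ltn_divLR // -expnSr.
by rewrite digit0 addnC mulnC -divn_eq.
Qed.

Lemma sp_digits L u : u < p ^ L -> sp p u = \sum_(i < L) digit i u.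
Proof.
move=> lt_u; transitivity (\sum_(i < L + u.+1) digit i u).
  rewrite /sp; symmetry; apply: (@sum_ord_trunc (digit^~ u) u.+1) => [|i lt_ui].
    exact: leq_addl.
  by apply/digit_small/(leq_trans lt_ui)/ltnW/ltn_expl.
apply: (@sum_ord_trunc (digit^~ u)) => [|i le_Li]; first exact: leq_addr.
by apply/digit_small/(leq_trans lt_u); rewrite leq_exp2l.
Qed.

(* The shift acts on [0, p^r) as the cyclic rotation of the r base-p digits;
   [rot_digits r k u] is the k-fold rotation. *)
Definition rot_digits r k u := u %% p ^ (r - k) * p ^ k + u %/ p ^ (r - k).

Lemma shift_rot1 r x : 0 < r -> x < p ^ r ->
  shift p r x = p * (x %% p ^ r.-1) + x %/ p ^ r.-1.
Proof.
case: r => // r _; rewrite /shift expnS /= => lt_x.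
set X := p ^ r; have X_gt0 : 0 < X by rewrite expn_gt0 p_gt0.
have ht : x %/ X < p by rewrite ltn_divLR // mulnC.
have ha := ltn_pmod x X_gt0.
rewrite {1 2 3}(divn_eq x X); move: ht ha; set t := x %/ X; set a := x %% X => ht ha.
have -> : p * (t * X + a) = t * (p * X - 1) + (p * a + t) by nia.
case: eqP => [E|NE].
  have [-> ->] : t = p.-1 /\ a = X.-1 by nia.
  nia.
rewrite modnMDl modn_small //; nia.
Qed.

Lemma rot_digits_step r k u : k < r -> u < p ^ r ->
  [/\ rot_digits r k u < p ^ r, shift p r (rot_digits r k u) = rot_digits r k.+1 u
    & rot_digits r k u %/ p ^ r.-1 = digit (r.-1 - k) u].
Proof.
move=> lt_kr; have [e ->] : exists e, r = (e + k).+1 by exists (r - k).-1; lia.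
rewrite /rot_digits /= addnK.
have -> : (e + k).+1 - k = e.+1 by lia.
have -> : (e + k).+1 - k.+1 = e by lia.
rewrite expnS expnD expnSr => lt_u.
have P_gt0 : 0 < p ^ e by rewrite expn_gt0 p_gt0.
have Q_gt0 : 0 < p ^ k by rewrite expn_gt0 p_gt0.
move: P_gt0 Q_gt0 lt_u; set P := p ^ e; set Q := p ^ k => P_gt0 Q_gt0 lt_u.
have ha := ltn_pmod u P_gt0; have ha1 : digit e u < p by apply: ltn_pmod.
set a := u %% P; set a1 := digit e u; set b := u %/ (P * p).
have Eu : u %/ P = b * p + a1 by rewrite /b divnMA [LHS](divn_eq _ p).
have Eu1 : u %% (P * p) = a1 * P + a.
  rewrite {1}(divn_eq u P) Eu mulnDl -mulnA (mulnC p) -addnA modnMDl modn_small //; nia.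
have hb : b < Q by rewrite ltn_divLR ?muln_gt0 ?P_gt0 //; nia.
have Erot : (a1 * P + a) * Q + b = a1 * (P * Q) + (a * Q + b) by nia.
have lt_low : a * Q + b < P * Q by nia.
rewrite Eu1 Erot Eu divnMDl ?muln_gt0 ?P_gt0 // divn_small // addn0; split => //.
- nia.
- rewrite shift_rot1 //=; last by rewrite expnS expnD -/P -/Q; nia.
  rewrite expnD -/P -/Q modnMDl modn_small // divnMDl ?muln_gt0 ?P_gt0 //.
  by rewrite divn_small // addn0 expnS -/Q; nia.
Qed.

Lemma iter_shift r k u : u < p ^ r -> k <= r ->
  iter k (shift p r) u = rot_digits r k u.
Proof.
move=> lt_u; elim: k => [|k IH] le_kr.
  by rewrite /rot_digits subn0 expn0 muln1 modn_small // divn_small // addn0.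
by rewrite iterS IH ?(ltnW le_kr) //; case: (rot_digits_step le_kr lt_u).
Qed.

Lemma iter_shift_id r u : u < p ^ r -> iter r (shift p r) u = u.
Proof. by move=> lt_u; rewrite iter_shift // /rot_digits subnn expn0 modn1 divn1. Qed.

(* Multiplying by p overflows the r digits exactly by the top digit. *)
Lemma shift_carry r x : 0 < r -> x < p ^ r ->
  shift p r x + (p ^ r - 1) * (x %/ p ^ r.-1) = p * x.
Proof.
move=> r_gt0 lt_x; rewrite shift_rot1 //.
case: r r_gt0 lt_x => // r _; rewrite /= expnS => lt_x.
have P_gt0 : 0 < p ^ r by rewrite expn_gt0 p_gt0.
have := divn_eq x (p ^ r); move: (x %/ p ^ r) (x %% p ^ r) => t a ->.
nia.
Qed.

End Digits.

Section Walks.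
Variables (n : nat) (D : seq {ffun 'I_n -> nat}) (p : nat).
Hypothesis p_gt1 : 1 < p.
Local Notation fam := {ffun seq_sub D -> nat}.
Local Notation vec := {ffun 'I_n -> nat}.

Definition edge (v : fam) (g g' : vec) :=
  (forall d, v d < p) /\ forall j, \sum_(d : seq_sub D) v d * ssval d j + g j = p * g' j.
Definition walk L (v : nat -> fam) (g : nat -> vec) :=
  forall i, i < L -> edge (v i) (g i) (g i.+1).
Definition closed_walk L v g := [/\ walk L v g, g L = g 0 & forall j, 0 < g 0 j].
Definition weight L (v : nat -> fam) := \sum_(i < L) \sum_(d : seq_sub D) v i d.
Definition minimal_walk L v :=
  forall r (U : fam), inE D p r U -> weight L v * r <= spU D p U * L.

Definition undigitsU L (v : nat -> fam) : fam := [ffun d => undigits p L (v^~ d)].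
Definition digitU (U : fam) i : fam := [ffun d => digit p i (U d)].

Lemma undigitsU_lt L v g : walk L v g -> forall d, undigitsU L v d < p ^ L.
Proof. by move=> vg d; rewrite ffunE; apply: undigits_lt => // i /vg []. Qed.

Lemma digitU_undigitsU L v g : walk L v g -> forall i, i < L -> digitU (undigitsU L v) i = v i.
Proof.
move=> vg i lt_i; apply/ffunP => d; rewrite !ffunE digit_undigits // => k /vg [lt_v _].
exact: lt_v.
Qed.

Lemma spU_undigitsU L v g : walk L v g -> spU D p (undigitsU L v) = weight L v.
Proof.
move=> vg; rewrite /spU /weight exchange_big; apply: eq_bigr => d _.
rewrite (sp_digits p_gt1 (undigitsU_lt vg d)); apply: eq_bigr => i _.
by rewrite -[in RHS](digitU_undigitsU vg (ltn_ord i)) [RHS]ffunE.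
Qed.

Lemma wsum_undigitsU L v g : walk L v g ->
  forall j, wsum D (undigitsU L v) j + g 0 j = p ^ L * g L j.
Proof.
move=> vg j; rewrite ffunE.
elim: L vg => [|L IH] vg.
  by rewrite expn0 mul1n big1 // => d _; rewrite ffunE /undigits big_ord0.
have [_ vg_L] := vg L (ltnSn L).
have expand d : undigitsU L.+1 v d * ssval d j =
    undigitsU L v d * ssval d j + p ^ L * (v L d * ssval d j).
  by rewrite !ffunE /undigits big_ord_recr /=; lia.
rewrite (eq_bigr _ (fun d _ => expand d)) big_split /= -big_distrr /= addnAC.
by rewrite IH => [|i /ltnW /vg //]; rewrite -mulnDr addnC vg_L expnS; lia.
Qed.

Lemma iter_shiftU k r (U : fam) d :
  iter k (shiftU D p r) U d = iter k (shift p r) (U d).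
Proof. by elim: k => //= k IH; rewrite ffunE IH. Qed.

Lemma iter_shiftU_id r (U : fam) : (forall d, U d < p ^ r) ->
  iter r (shiftU D p r) U = U.
Proof. by move=> lt_U; apply/ffunP => d; rewrite iter_shiftU iter_shift_id. Qed.

Lemma predn_exp_gt0 r : 0 < r -> 0 < p ^ r - 1.
Proof. by move=> r_gt0; have := ltn_expl r p_gt1; lia. Qed.

Lemma wsum_iter_shiftU r (U : fam) k j : 0 < r -> (forall d, U d < p ^ r) -> k < r ->
  wsum D (iter k.+1 (shiftU D p r) U) j +
    (p ^ r - 1) * \sum_(d : seq_sub D) digit p (r.-1 - k) (U d) * ssval d j
  = p * wsum D (iter k (shiftU D p r) U) j.
Proof.
move=> r_gt0 lt_U lt_k; rewrite !ffunE !big_distrr -big_split; apply: eq_bigr => d _ /=.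
rewrite ffunE !iter_shiftU (iter_shift p_gt1 (lt_U d) (ltnW lt_k)).
have [lt_rot _ top_rot] := rot_digits_step p_gt1 lt_k (lt_U d).
by rewrite -top_rot mulnA -mulnDl (shift_carry p_gt1 r_gt0 lt_rot); lia.
Qed.

Lemma wsum_iter_shiftU_dvd r (U : fam) k j : inE D p r U -> k <= r ->
  (p ^ r - 1) %| wsum D (iter k (shiftU D p r) U) j.
Proof.
case=> r_gt0 [lt_U [dvd_U _]]; elim: k => [|k IH] le_k //.
have : (p ^ r - 1) %| p * wsum D (iter k (shiftU D p r) U) j.
  by rewrite dvdn_mull // IH // ltnW.
by rewrite -(wsum_iter_shiftU j r_gt0 lt_U le_k) dvdn_addl // dvdn_mulr.
Qed.

Lemma phiU_rec r (U : fam) k j : inE D p r U -> k < r ->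
  phiU D p r U k.+1 j + \sum_(d : seq_sub D) digit p (r.-1 - k) (U d) * ssval d j
    = p * phiU D p r U k j.
Proof.
move=> EU lt_k; have [r_gt0 [lt_U _]] := EU.
have M_gt0 := predn_exp_gt0 r_gt0.
have [q1 E1] := dvdnP (wsum_iter_shiftU_dvd j EU lt_k).
have [q2 E2] := dvdnP (wsum_iter_shiftU_dvd j EU (ltnW lt_k)).
have phiE k' : phiU D p r U k' j = wsum D (iter k' (shiftU D p r) U) j %/ (p ^ r - 1).
  by rewrite ffunE.
have := wsum_iter_shiftU j r_gt0 lt_U lt_k.
rewrite !phiE E1 E2 !mulnK // => E.
by apply/eqP; rewrite -(eqn_pmul2l M_gt0) mulnDr; apply/eqP; lia.
Qed.

Lemma phiU_r r (U : fam) : (forall d, U d < p ^ r) -> phiU D p r U r = phiU D p r U 0.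
Proof. by move=> lt_U; rewrite /phiU iter_shiftU_id. Qed.

Lemma phiU0_gt0 r (U : fam) j : inE D p r U -> 0 < phiU D p r U 0 j.
Proof.
case=> r_gt0 [_ [dvd_U pos_U]]; have [q E] := dvdnP (dvd_U j).
have -> : phiU D p r U 0 j = q by rewrite ffunE /= E mulnK // predn_exp_gt0.
by move: (pos_U j); rewrite E muln_gt0 => /andP [].
Qed.

Lemma closed_walk_inE r (U : fam) : inE D p r U ->
  closed_walk r (digitU U) (fun i => phiU D p r U (r - i)).
Proof.
move=> EU; have [r_gt0 [lt_U _]] := EU; split.
- move=> i lt_i; split=> [d|j]; first by rewrite ffunE ltn_pmod // ltnW.
  have := phiU_rec j EU (_ : r.-1 - i < r).
  have -> : (r.-1 - i).+1 = r - i by lia.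
  have -> : r.-1 - (r.-1 - i) = i by lia.
  have -> : r.-1 - i = r - i.+1 by lia.
  move=> <-; last lia.
  by rewrite addnC; congr (_ + _); apply: eq_bigr => d _; rewrite ffunE.
- by rewrite subnn subn0 phiU_r.
- by move=> j; rewrite subn0 phiU_r //; apply: phiU0_gt0.
Qed.

Lemma undigitsU_digitU r (U : fam) : inE D p r U -> undigitsU r (digitU U) = U.
Proof.
case=> _ [lt_U _]; apply/ffunP => d; rewrite ffunE -[RHS](undigits_digit p_gt1 (lt_U d)).
by apply: eq_undigits => i _; rewrite ffunE.
Qed.

Lemma spU_digitU r (U : fam) : inE D p r U -> spU D p U = weight r (digitU U).
Proof.
move=> EU; have [walkU _ _] := closed_walk_inE EU.
by rewrite -{1}(undigitsU_digitU EU) (spU_undigitsU walkU).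
Qed.

Lemma inE_undigitsU L v g : closed_walk L v g -> 0 < L ->
  inE D p L (undigitsU L v) /\ phiU D p L (undigitsU L v) 0 = g 0.
Proof.
case=> vg g_cl g_pos L_gt0; have M_gt0 := predn_exp_gt0 L_gt0.
have wsumE j : wsum D (undigitsU L v) j = (p ^ L - 1) * g 0 j.
  by have := wsum_undigitsU vg j; rewrite g_cl mulnBl mul1n; lia.
split; last by apply/ffunP => j; rewrite ffunE /= wsumE mulKn.
split=> //; split; first exact: undigitsU_lt vg.
by split=> j; rewrite wsumE ?dvdn_mulr // muln_gt0 M_gt0 g_pos.
Qed.

Lemma phiU_undigitsU L v g : closed_walk L v g -> 0 < L ->
  forall k, k <= L -> phiU D p L (undigitsU L v) k = g (L - k).
Proof.
move=> cw L_gt0; have [EU phi0] := inE_undigitsU cw L_gt0; have [vg g_cl _] := cw.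
elim=> [|k IH] lt_k; first by rewrite phi0 subn0 g_cl.
apply/ffunP => j; have := phiU_rec j EU lt_k; rewrite IH; last exact: ltnW.
have lt_Lk : L - k.+1 < L by lia.
have [_ /(_ j)] := vg _ lt_Lk.
have -> : (L - k.+1).+1 = L - k by lia.
have -> : L.-1 - k = L - k.+1 by lia.
have sumE : \sum_(d : seq_sub D) digit p (L - k.+1) (undigitsU L v d) * ssval d j =
    \sum_(d : seq_sub D) v (L - k.+1) d * ssval d j.
  by apply: eq_bigr => d _; rewrite -(digitU_undigitsU vg lt_Lk) !ffunE.
by rewrite sumE => <-; rewrite [X in _ = X]addnC; apply: addIn.
Qed.

Lemma psi_undigitsU L v g : walk L v g -> 0 < L -> psi D p (undigitsU L v) = v 0.
Proof.
move=> vg L_gt0; rewrite -(digitU_undigitsU vg L_gt0).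
by apply/ffunP => d; rewrite !ffunE digit0.
Qed.

Lemma inMI_undigitsU L v g : closed_walk L v g -> 0 < L -> minimal_walk L v ->
  (forall x y, x < L -> y < L -> g x = g y -> x = y) -> inMI D p L (undigitsU L v).
Proof.
move=> cw L_gt0 min_v g_inj; have [EU _] := inE_undigitsU cw L_gt0; have [vg g_cl _] := cw.
split; first by split=> // r U EU'; rewrite (spU_undigitsU vg); apply: min_v.
have gE k : k < L -> phiU D p L (undigitsU L v) k = g ((L - k) %% L).
  move=> lt_k; rewrite (phiU_undigitsU cw) //; last exact: ltnW.
  by case: k lt_k => [|k] lt_k; rewrite ?subn0 ?modnn ?g_cl // modn_small //; lia.
move=> k1 k2 lt_k1 lt_k2; rewrite !gE // => /g_inj; rewrite !ltn_mod L_gt0 => /(_ isT isT).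
by case: k1 k2 lt_k1 lt_k2 => [|k1] [|k2]; rewrite ?subn0 ?modnn ?modn_small; lia.
Qed.

Lemma closed_walk_wrap L v g x : closed_walk L v g -> x < L -> g x.+1 = g (x.+1 %% L).
Proof.
case=> _ g_cl _ lt_x; case: (ltnP x.+1 L) => [lt_x1 | le_Lx]; first by rewrite modn_small.
have -> : x.+1 = L by lia.
by rewrite modnn.
Qed.

Lemma closed_walk_gt0 L v g i j : closed_walk L v g -> i <= L -> 0 < g i j.
Proof.
case=> vg _ g_pos; elim: i => [|i IH] le_i //.
have [_ /(_ j)] := vg i le_i; have := IH (ltnW le_i); case: (g i.+1 j) => //; lia.
Qed.

Lemma closed_walk_cycS L v g s i : closed_walk L v g -> 0 < L ->
  cyc L s g i.+1 = g ((s + i) %% L).+1.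
Proof.
move=> cw L_gt0; rewrite /cyc [RHS](closed_walk_wrap cw (ltn_pmod _ L_gt0)).
by rewrite -[in RHS]addn1 modnDml addn1 addnS.
Qed.

Lemma closed_walk_cyc L v g s l : closed_walk L v g -> 0 < L ->
  g (s %% L) = g ((s + l) %% L) -> closed_walk l (cyc L s v) (cyc L s g).
Proof.
move=> cw L_gt0 g_cl; have [vg _ _] := cw; split.
- by move=> i _; rewrite (closed_walk_cycS s i cw L_gt0); apply/vg/ltn_pmod.
- by rewrite /cyc addn0.
- by move=> j; apply: (closed_walk_gt0 _ cw); apply/ltnW/ltn_pmod.
Qed.

Lemma inV_cyc L v g s t j : closed_walk L v g -> 0 < L -> (s + t) %% L = j ->
  inV D p (cyc L s g t.+1) (cyc L s g t) (cyc L s v t) -> inV D p (g j.+1) (g j) (v j).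
Proof. by move=> cw L_gt0 <-; rewrite (closed_walk_cycS s t cw L_gt0). Qed.

Lemma weight_cat l1 l2 v :
  weight (l1 + l2) v = weight l1 v + weight l2 (fun i => v (l1 + i)).
Proof. by rewrite /weight big_split_ord. Qed.

Lemma minimal_walk_le L v l w g : minimal_walk L v -> closed_walk l w g ->
  weight L v * l <= weight l w * L.
Proof.
move=> min_v cw; case: (posnP l) => [-> | l_gt0]; first by rewrite muln0.
have [[EU _] [vg _ _]] := (inE_undigitsU cw l_gt0, cw).
by rewrite -(spU_undigitsU vg); apply: min_v.
Qed.

Lemma minimalE_walk r (U : fam) : minimalE D p r U -> minimal_walk r (digitU U).
Proof. by case=> EU minU r' U' EU'; rewrite -(spU_digitU EU); apply: minU. Qed.

Lemma inE_return_walk r (U : fam) : inE D p r U ->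
  let vs k := digitU U k.+1 in let gs k := phiU D p r U (r - k.+1) in
  [/\ walk r.-1 vs gs, gs 0 = phiU D p r U r.-1, gs r.-1 = phiU D p r U 0
    & spU D p U = \sum_(d : seq_sub D) psi D p U d + weight r.-1 vs].
Proof.
move=> EU vs gs; have r_gt0 := EU.1; have [walkU _ _] := closed_walk_inE EU.
split; rewrite /gs ?subn1 ?prednK ?subnn //.
- by move=> k lt_k; apply: walkU; lia.
rewrite (spU_digitU EU) -{1}(prednK r_gt0) -add1n weight_cat /weight big_ord1.
by congr (_ + _); apply: eq_bigr => d _; rewrite !ffunE digit0.
Qed.

Lemma weight_cyc L v s : 0 < L -> weight L (cyc L s v) = weight L v.
Proof. exact: (sum_ord_rot (fun i => \sum_(d : seq_sub D) v i d)). Qed.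

Lemma minimal_walk_cyc L v s : 0 < L -> minimal_walk L v -> minimal_walk L (cyc L s v).
Proof. by move=> L_gt0 min_v r U EU; rewrite weight_cyc //; apply: min_v. Qed.

Lemma minimal_walk_split l1 v1 g1 l2 v2 g2 v : 0 < l1 ->
  closed_walk l1 v1 g1 -> closed_walk l2 v2 g2 -> minimal_walk (l1 + l2) v ->
  weight l1 v1 + weight l2 v2 = weight (l1 + l2) v -> minimal_walk l1 v1.
Proof.
move=> l1_gt0 cw1 cw2 min_v wE.
have := minimal_walk_le min_v cw1; have := minimal_walk_le min_v cw2; rewrite -wE => m2 m1.
have ratioE : weight l1 v1 * (l1 + l2) <= weight (l1 + l2) v * l1 by rewrite -wE; nia.
by move=> r U EU; apply: (leq_ratio_trans _ ratioE (min_v r U EU)); lia.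
Qed.

Lemma inV_first_edge L v g : closed_walk L v g -> 0 < L -> minimal_walk L v ->
  (forall x y, x < L -> y < L -> g x = g y -> x = y) -> inV D p (g 1) (g 0) (v 0).
Proof.
move=> cw L_gt0 min_v g_inj; have [vg g_cl _] := cw.
exists L, (undigitsU L v); split; first exact: inMI_undigitsU cw L_gt0 min_v g_inj.
- by rewrite (phiU_undigitsU cw) ?leq_pred //; congr (g _); lia.
- by rewrite (phiU_undigitsU cw) // subn0.
- exact: psi_undigitsU vg L_gt0.
Qed.

Lemma injective_walk_inV L v g : closed_walk L v g -> 0 < L -> minimal_walk L v ->
  injective (fun i : 'I_L => g i) -> forall j, j < L -> inV D p (g j.+1) (g j) (v j).
Proof.
move=> cw L_gt0 min_v g_inj j lt_j.
have cwj : closed_walk L (cyc L j v) (cyc L j g) by apply: closed_walk_cyc; rewrite ?modnDr.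
apply: (inV_cyc (t := 0) cw L_gt0 _ (inV_first_edge cwj L_gt0 _ _)).
- by rewrite addn0 modn_small.
- exact: minimal_walk_cyc.
move=> x y lt_x lt_y; rewrite /cyc => gxy.
have /(congr1 val)/eqP := g_inj (Ordinal (ltn_pmod _ L_gt0)) (Ordinal (ltn_pmod _ L_gt0)) gxy.
by rewrite /= eqn_modDl !modn_small // => /eqP.
Qed.

Lemma minimal_walk_inV L v g : closed_walk L v g -> 0 < L -> minimal_walk L v ->
  forall j, j < L -> inV D p (g j.+1) (g j) (v j).
Proof.
elim/ltn_ind: L v g => L IH v g cw L_gt0 min_v j lt_j.
case: (boolP (injectiveb (fun i : 'I_L => g i))) => [/injectiveP g_inj | /injectivePn].
  exact: injective_walk_inV cw L_gt0 min_v g_inj j lt_j.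
case=> x [y neq_xy gxy].
have [a [b [lt_ab lt_bL gab]]] : exists a b, [/\ a < b, b < L & g a = g b].
  case: (ltngtP x y) => [lt_xy | lt_yx | /val_inj eq_xy]; [by exists x, y | by exists y, x |].
  by rewrite eq_xy eqxx in neq_xy.
set c := b - a; have c_gt0 : 0 < c by lia.
have lt_cL : c < L by lia.
have l2_gt0 : 0 < L - c by lia.
have lt_l2L : L - c < L by lia.
have cw1 : closed_walk c (cyc L a v) (cyc L a g).
  by apply: closed_walk_cyc; rewrite // subnKC ?(ltnW lt_ab) // !modn_small //; lia.
have cw2 : closed_walk (L - c) (cyc L b v) (cyc L b g).
  apply: closed_walk_cyc => //; have -> : b + (L - c) = a + L by lia.
  by rewrite modnDr !modn_small //; lia.
have wE : weight c (cyc L a v) + weight (L - c) (cyc L b v) = weight L v.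
  have -> : weight L v = weight (c + (L - c)) (cyc L a v).
    by rewrite subnKC ?weight_cyc // ltnW.
  rewrite weight_cat; congr (_ + _); apply: eq_bigr => i _.
  by rewrite /cyc (_ : a + (c + i) = b + i) //; lia.
have min1 : minimal_walk c (cyc L a v).
  by apply: (minimal_walk_split c_gt0 cw1 cw2 (v := v)); rewrite subnKC ?(ltnW lt_cL).
have min2 : minimal_walk (L - c) (cyc L b v).
  apply: (minimal_walk_split l2_gt0 cw2 cw1 (v := v)); rewrite subnK ?(ltnW lt_cL) //.
  by rewrite addnC.
set t := (j + (L - a)) %% L.
have jE : (a + t) %% L = j.
  by rewrite modnDmr (_ : a + (j + (L - a)) = j + L) ?modnDr ?modn_small //; lia.
case: (ltnP t c) => [lt_tc | le_ct].
  exact: (inV_cyc cw L_gt0 jE (IH c lt_cL _ _ cw1 c_gt0 min1 t lt_tc)).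
apply: (inV_cyc (t := t - c) cw L_gt0 _ (IH _ lt_l2L _ _ cw2 l2_gt0 min2 _ _)).
  by rewrite (_ : b + (t - c) = a + t) //; lia.
by have := ltn_pmod (j + (L - a)) L_gt0; lia.
Qed.

Lemma edge_of_inV e e' w : inV D p e e' w -> edge w e' e.
Proof.
case=> r [U [[[EU _] _] phi_last phi0 <-]]; have [r_gt0 [lt_U _]] := EU.
have [walkU _ _] := closed_walk_inE EU; have := walkU 0 r_gt0.
rewrite subn0 phiU_r // phi0 subn1 phi_last (_ : digitU U 0 = psi D p U) //.
by apply/ffunP => d; rewrite !ffunE digit0.
Qed.

Lemma inV_gt0 e e' w j : inV D p e e' w -> 0 < e' j.
Proof. by case=> r [U [[[EU _] _] _ <- _]]; apply: phiU0_gt0 EU. Qed.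

Lemma walk_splice a b v1 g1 v2 g2 : walk a v1 g1 -> walk b v2 g2 -> g1 a = g2 0 ->
  walk (a + b) (splice a v1 v2) (splice a g1 g2).
Proof.
move=> vg1 vg2 g_mid i lt_i; rewrite /splice; case: (ltnP i a) => [lt_ia | le_ai].
  case: (ltnP i.+1 a) => [_ | le_a]; first exact: vg1.
  have -> : i.+1 - a = 0 by lia.
  by rewrite -g_mid (_ : a = i.+1); [apply: vg1 | lia].
by rewrite ltnNge (leqW le_ai) /= subSn //; apply: vg2; lia.
Qed.

Lemma weight_splice a b v1 v2 : weight (a + b) (splice a v1 v2) = weight a v1 + weight b v2.
Proof.
rewrite weight_cat; congr (_ + _); apply: eq_bigr => i _; rewrite /splice.
  by rewrite ltn_ord.
by rewrite ltnNge leq_addr addKn.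
Qed.

Lemma walk_concat k (l : nat -> nat) (vs : nat -> nat -> fam) (gs : nat -> nat -> vec) g :
  (forall i, i < k -> [/\ walk (l i) (vs i) (gs i), gs i 0 = g i.+1 & gs i (l i) = g i]) ->
  exists v g', let L := \sum_(i < k) l i in
    [/\ walk L v g', g' 0 = g k, g' L = g 0 & weight L v = \sum_(i < k) weight (l i) (vs i)].
Proof.
elim: k => [|k IH] pieces.
  by exists (vs 0), (fun=> g 0); rewrite !big_ord0 /weight big_ord0.
have [v [g' [vg g'0 g'L wE]]] := IH (fun i lt_i => pieces i (ltnW lt_i)).
have [vgk gk0 gkl] := pieces k (ltnSn k).
exists (splice (l k) (vs k) v), (splice (l k) (gs k) g').
rewrite !big_ord_recr /= addnC; split.
- by apply: walk_splice; rewrite // gkl g'0.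
- by rewrite splice0 // gkl g'0.
- by rewrite splice_end.
- by rewrite weight_splice wE addnC.
Qed.

Lemma closed_walk_of_inV L v g : 0 < L -> g L = g 0 ->
  (forall i, i < L -> inV D p (g i.+1) (g i) (v i)) -> closed_walk L v g.
Proof.
move=> L_gt0 g_cl Vg; split=> // [i /Vg /edge_of_inV // | j].
exact: inV_gt0 (Vg 0 L_gt0).
Qed.

Lemma minimal_walk_of_inV L v g : 0 < L -> g L = g 0 ->
  (forall i, i < L -> inV D p (g i.+1) (g i) (v i)) -> minimal_walk L v.
Proof.
move=> L_gt0 g_cl Vg.
have ex_loop i : i < L -> exists x : nat * fam,
    [/\ inMI D p x.1 x.2, phiU D p x.1 x.2 x.1.-1 = g i.+1,
        phiU D p x.1 x.2 0 = g i & psi D p x.2 = v i].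
  by move/Vg => [r [U loop]]; exists (r, U).
have [rU loopP] := bounded_all_exists (0, [ffun=> 0]) ex_loop.
pose r i := (rU i).1; pose U i := (rU i).2; pose S i := spU D p (U i).
have minU i : i < L -> minimalE D p (r i) (U i) by case/loopP => [[]].
have r_gt0 i : i < L -> 0 < r i by case/minU => [[]].
pose vs i k := digitU (U i) k.+1; pose gs i k := phiU D p (r i) (U i) (r i - k.+1).
have returns i : i < L ->
  [/\ walk (r i).-1 (vs i) (gs i), gs i 0 = g i.+1 & gs i (r i).-1 = g i].
  by case/loopP=> [[[EU _] _] <- <- _]; have [] := inE_return_walk EU.
have S_split i : i < L -> S i = \sum_(d : seq_sub D) v i d + weight (r i).-1 (vs i).
  by case/loopP=> [[[EU _] _] _ _ <-]; have [] := inE_return_walk EU.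
have S_ratio i : i < L -> S i * r 0 = S 0 * r i.
  move=> lt_i; have [[EUi min_i] [EU0 min_0]] := (minU i lt_i, minU 0 L_gt0).
  by apply/eqP; rewrite eqn_leq min_i ?min_0.
have [w [g' [vg' g'0 g'L wE]]] := walk_concat returns.
set Lr := \sum_(i < L) (r i).-1 in vg' g'0 g'L wE.
have cw' : closed_walk Lr w g'.
  split=> [//||j]; first by rewrite g'L g'0 g_cl.
  by rewrite g'0 g_cl; exact: inV_gt0 (Vg 0 L_gt0).
have ret_bound : S 0 * Lr <= weight Lr w * r 0.
  rewrite /S (spU_digitU (minU 0 L_gt0).1).
  exact: minimal_walk_le (minimalE_walk (minU 0 L_gt0)) cw'.
have sumS : (\sum_(i < L) S i) * r 0 = S 0 * (L + Lr).
  rewrite big_distrl /= (eq_bigr (fun i : 'I_L => S 0 * r i)) => [|i _]; last exact: S_ratio.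
  rewrite -big_distrr /= -[X in X + _]card_ord -sum1_card -big_split /=.
  by congr (_ * _); apply: eq_bigr => i _; rewrite add1n prednK ?r_gt0.
have sumS' : \sum_(i < L) S i = weight L v + weight Lr w.
  by rewrite wE -big_split /=; apply: eq_bigr => i _; apply: S_split.
have ratio_v : weight L v * r 0 <= S 0 * L.
  by move: sumS ret_bound; rewrite sumS' mulnDl mulnDr; lia.
move=> r' U' EU'; have [_ min_U0] := minU 0 L_gt0.
exact: leq_ratio_trans (r_gt0 0 L_gt0) ratio_v (min_U0 r' U' EU').
Qed.

Section Support.
Variables (m : nat) (phi : 'I_m -> vec).
Hypothesis m_gt0 : 0 < m.

Let phi_at i := phi (Ordinal (ltn_pmod i m_gt0)).

Lemma phi_at_ord (k : 'I_m) : phi_at k = phi k.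
Proof. by congr phi; apply: val_inj; rewrite /= modn_small. Qed.

Lemma phi_at_rev (i : 'I_m) : phi_at (m - i.+1) = phi (rev_ord i).
Proof. by congr phi; apply: val_inj; rewrite /= modn_small // ltn_subrL. Qed.

Lemma phi_at_ordS (i : 'I_m) : phi_at (m - i) = phi (ordS (rev_ord i)).
Proof. by congr phi; apply: val_inj; rewrite /= subnSK. Qed.

Lemma phiU_phi_at (U : fam) k : inM D p phi U -> k <= m -> phiU D p m U k = phi_at k.
Proof.
case=> [[[_ [lt_U _]] _] phiE]; rewrite leq_eqVlt => /predU1P [-> | lt_k].
  by rewrite phiU_r // (phiE (Ordinal m_gt0)) /phi_at; congr phi; apply: val_inj; rewrite /= modnn.
by rewrite (phiE (Ordinal lt_k)) -(phi_at_ord (Ordinal lt_k)).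
Qed.

Lemma inM_Bdig_inV (U : fam) : inM D p phi U ->
  forall i : 'I_m, inV D p (phi (rev_ord i)) (phi (ordS (rev_ord i))) (Bdig D p U i).
Proof.
move=> MU i; have [minU _] := MU.
have := minimal_walk_inV (closed_walk_inE minU.1) m_gt0 (minimalE_walk minU) (ltn_ord i).
rewrite !(phiU_phi_at MU) ?leq_subr // phi_at_rev phi_at_ordS.
by congr inV; apply/ffunP => d; rewrite !ffunE.
Qed.

Lemma inM_Bdig_inj (U U' : fam) : inM D p phi U -> inM D p phi U' ->
  (forall i : 'I_m, Bdig D p U i = Bdig D p U' i) -> U = U'.
Proof.
move=> [[EU _] _] [[EU' _] _] eq_B.
rewrite -(undigitsU_digitU EU) -(undigitsU_digitU EU'); apply/ffunP => d; rewrite !ffunE.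
by apply: eq_undigits => i lt_i; move/ffunP: (eq_B (Ordinal lt_i)) => /(_ d); rewrite !ffunE.
Qed.

Lemma inM_of_Bdig_inV (W : 'I_m -> fam) :
  (forall i : 'I_m, inV D p (phi (rev_ord i)) (phi (ordS (rev_ord i))) (W i)) ->
  exists2 U, inM D p phi U & forall i : 'I_m, Bdig D p U i = W i.
Proof.
move=> VW; pose v i := W (Ordinal (ltn_pmod i m_gt0)); pose g i := phi_at (m - i).
have g_cl : g m = g 0.
  by rewrite /g /phi_at subnn subn0; congr phi; apply: val_inj; rewrite /= modnn mod0n.
have Vg i : i < m -> inV D p (g i.+1) (g i) (v i).
  move=> lt_i; rewrite /g /v (phi_at_rev (Ordinal lt_i)) (phi_at_ordS (Ordinal lt_i)).
  by rewrite (_ : Ordinal _ = Ordinal lt_i) //; apply: val_inj; rewrite /= modn_small.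
have cw := closed_walk_of_inV m_gt0 g_cl Vg; have [vg _ _] := cw.
have [EU _] := inE_undigitsU cw m_gt0; have min_v := minimal_walk_of_inV m_gt0 g_cl Vg.
exists (undigitsU m v).
  split; first by split=> // r U EU'; rewrite (spU_undigitsU vg); apply: min_v.
  move=> k; rewrite (phiU_undigitsU cw) //; last exact: ltnW.
  by rewrite /g subKn ?phi_at_ord // ltnW.
move=> i; have -> : W i = v i by congr W; apply: val_inj; rewrite /= modn_small.
rewrite -(digitU_undigitsU vg (ltn_ord i)).
by apply/ffunP => d; rewrite !ffunE.
Qed.

End Support.
End Walks.

Theorem proposition2p18 (n : nat) (D : seq {ffun 'I_n -> nat}) (p m : nat)
    (phi : 'I_m -> {ffun 'I_n -> nat}) :
  (forall j : 'I_n, exists2 d, d \in D & 0 < d j) ->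
  prime p -> 0 < m ->
  (forall k : 'I_m, inSigma D p (phi k)) ->
  ((~ exists U, inM D p phi U) <->
     exists i : 'I_m, ~ exists v, inV D p (phi (rev_ord i)) (phi (ordS (rev_ord i))) v)
  /\
  ((forall i : 'I_m, exists v, inV D p (phi (rev_ord i)) (phi (ordS (rev_ord i))) v) ->
     [/\ (forall U, inM D p phi U -> forall i : 'I_m,
            inV D p (phi (rev_ord i)) (phi (ordS (rev_ord i))) (Bdig D p U i)),
         (forall U U', inM D p phi U -> inM D p phi U' ->
            (forall i : 'I_m, Bdig D p U i = Bdig D p U' i) -> U = U')
       & (forall W : 'I_m -> {ffun seq_sub D -> nat},
            (forall i : 'I_m, inV D p (phi (rev_ord i)) (phi (ordS (rev_ord i))) (W i)) ->
            exists2 U, inM D p phi U & forall i : 'I_m, Bdig D p U i = W i)]).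
Proof.
move=> _ /prime_gt1 p_gt1 m_gt0 _; split; first split.
- move=> noU; apply: NNPP => allV; apply: noU.
  have exV i : exists v, inV D p (phi (rev_ord i)) (phi (ordS (rev_ord i))) v.
    by apply: NNPP => noV; apply: allV; exists i.
  have [W VW] := fin_all_exists exV.
  by have [U MU _] := inM_of_Bdig_inV p_gt1 m_gt0 VW; exists U.
- by case=> i noV [U MU]; apply: noV; exists (Bdig D p U i); apply: inM_Bdig_inV.
- move=> _; split; [exact: inM_Bdig_inV | exact: inM_Bdig_inj | exact: inM_of_Bdig_inV].
Qed.
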